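(* Let $(\mathcal{A},\mathcal{E})$ be a finite, essentially small exact category and $X$ indecomposable. A chain $X_1\subsetneq_\mathcal{E}X_2\subsetneq_\mathcal{E}\cdots\subsetneq_\mathcal{E}X_n=X$ of indecomposable objects is an $\mathcal{E}$-Gabriel–Roiter filtration of $X$ if and only if it is a $\mu_\mathcal{E}$-filtration of $X$.
   Context: $(\mathcal{A},\mathcal{E})$ is a Quillen exact category; admissible monics are morphisms $i$ with $(i,d)\in\mathcal{E}$ for some $d$. $X\subsetneq_\mathcal{E}Y$ means there is an admissible monic $X\to Y$ that is not an isomorphism. A nonzero object $S$ is $\mathcal{E}$-simple if every object admitting an admissible monic into $S$ is zero or isomorphic to $S$. The $\mathcal{E}$-length $l_\mathcal{E}(X)$ is the supremum of all $n$ such that there is a chain $0=X_0\to\cdots\to X_n=X$ of admissible monics none of which is an isomorphism; $(\mathcal{A},\mathcal{E})$ is finite if $l_\mathcal{E}(X)<\infty$ for all $X$. $\mathfrak{S}(\mathbb{N})$ is the set of finite nonempty sequences of natural numbers, totally ordered by: $x\lll y$ iff $x=y$, or $x$ is a proper prefix of $y$, or at the first index $i$ where $x_i\neq y_i$ (both defined) one has $x_i>y_i$. For indecomposable $X$, $\mu_\mathcal{E}(X)$ is the $\lll$-maximum of $(l_\mathcal{E}(X_1),\dots,l_\mathcal{E}(X_n))$ over all chains $X_1\subsetneq_\mathcal{E}\cdots\subsetneq_\mathcal{E}X_n=X$ ($n\ge1$) with all $X_i$ indecomposable. A chain of indecomposables $X_1\subsetneq_\mathcal{E}\cdots\subsetneq_\mathcal{E}X_n=X$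 is a $\mu_\mathcal{E}$-filtration of $X$ if for all $i$, $\mu_\mathcal{E}(X_i)$ equals the prefix of length $i$ of $\mu_\mathcal{E}(X)$. For indecomposables $X,Y$, $X$ is an $\mathcal{E}$-Gabriel–Roiter predecessor of $Y$ if $X\subsetneq_\mathcal{E}Y$ and $\mu_\mathcal{E}(X)=\max\{\mu_\mathcal{E}(Y') : Y'\text{ indecomposable},\ Y'\subsetneq_\mathcal{E}Y\}$. A chain of indecomposables $X_1\subsetneq_\mathcal{E}\cdots\subsetneq_\mathcal{E}X_n=X$ is an $\mathcal{E}$-Gabriel–Roiter filtration of $X$ if $X_1$ is $\mathcal{E}$-simple and $X_{i-1}$ is an $\mathcal{E}$-Gabriel–Roiter predecessor of $X_i$ for all $2\le i\le n$. *)

From HB Require Import structures.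
From mathcomp Require Import all_boot all_order all_algebra.
Set Implicit Arguments. Unset Strict Implicit. Unset Printing Implicit Defensive.
Import GRing.Theory.
Local Open Scope ring_scope.

Definition exu (T : Type) (P : T -> Prop) : Prop :=
  exists x, P x /\ forall y, P y -> y = x.

Record AddCat := {
  Obj : Type;
  Hom : Obj -> Obj -> zmodType;
  idm : forall X, Hom X X;
  comp : forall X Y Z, Hom Y Z -> Hom X Y -> Hom X Z;
  compA : forall X Y Z W (h : Hom Z W) (g : Hom Y Z) (f : Hom X Y),
      comp h (comp g f) = comp (comp h g) f;
  comp1m : forall X Y (f : Hom X Y), comp (idm Y) f = f;
  compm1 : forall X Y (f : Hom X Y), comp f (idm X) = f;
  compDl : forall X Y Z (g g' : Hom Y Z) (f : Hom X Y),
      comp (g + g') f = comp g f + comp g' f;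
  compDr : forall X Y Z (g : Hom Y Z) (f f' : Hom X Y),
      comp g (f + f') = comp g f + comp g f';
  has_zero : exists Z : Obj, idm Z = 0;
  has_biprod : forall A B : Obj, exists (S : Obj)
      (i1 : Hom A S) (i2 : Hom B S) (p1 : Hom S A) (p2 : Hom S B),
      [/\ comp p1 i1 = idm A, comp p2 i2 = idm B,
          comp p1 i2 = 0, comp p2 i1 = 0 &
          comp i1 p1 + comp i2 p2 = idm S]
}.

Arguments idm {a} X.
Arguments comp {a X Y Z} g f.

Section AddCatDefs.
Variable C : AddCat.
Local Notation Obj := (Obj C).

Definition is_zero (X : Obj) : Prop := idm X = 0 :> Hom X X.

Definition is_iso (X Y : Obj) (f : Hom X Y) : Prop :=
  exists g : Hom Y X, comp g f = idm X /\ comp f g = idm Y.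

Definition isomorphic (X Y : Obj) : Prop := exists f : Hom X Y, is_iso f.

Definition is_biprod (X A B : Obj) : Prop :=
  exists (i1 : Hom A X) (i2 : Hom B X) (p1 : Hom X A) (p2 : Hom X B),
      [/\ comp p1 i1 = idm A, comp p2 i2 = idm B,
          comp p1 i2 = 0, comp p2 i1 = 0 &
          comp i1 p1 + comp i2 p2 = idm X].

Definition indecomposable (X : Obj) : Prop :=
  ~ is_zero X /\ forall A B, is_biprod X A B -> is_zero A \/ is_zero B.

Definition is_kernel (A B D : Obj) (i : Hom A B) (d : Hom B D) : Prop :=
  comp d i = 0 /\
  forall W (g : Hom W B), comp d g = 0 -> exu (fun h : Hom W A => comp i h = g).

Definition is_cokernel (A B D : Obj) (i : Hom A B) (d : Hom B D) : Prop :=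
  comp d i = 0 /\
  forall W (g : Hom B W), comp g i = 0 -> exu (fun h : Hom D W => comp h d = g).

End AddCatDefs.

(* Quillen exact categories (axioms as in Buehler, "Exact categories") *)
Record ExactCat := {
  ecat : AddCat;
  Ex : forall A B D : Obj ecat, Hom A B -> Hom B D -> Prop;
  Ex_kc : forall A B D (i : Hom A B) (d : Hom B D),
      Ex i d -> is_kernel i d /\ is_cokernel i d;
  Ex_iso : forall A B D A' B' D' (i : Hom A B) (d : Hom B D)
      (i' : Hom A' B') (d' : Hom B' D')
      (a : Hom A A') (b : Hom B B') (c : Hom D D'),
      Ex i d -> is_iso a -> is_iso b -> is_iso c ->
      comp b i = comp i' a -> comp c d = comp d' b -> Ex i' d';
  Ex_id_mono : forall A, exists D (d : Hom A D), Ex (idm A) d;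
  Ex_id_epi : forall A, exists D (i : Hom D A), Ex i (idm A);
  Ex_comp_mono : forall A B D (f : Hom A B) (g : Hom B D),
      (exists E (d : Hom B E), Ex f d) ->
      (exists E (d : Hom D E), Ex g d) ->
      exists E (d : Hom D E), Ex (comp g f) d;
  Ex_comp_epi : forall A B D (f : Hom A B) (g : Hom B D),
      (exists E (i : Hom E A), Ex i f) ->
      (exists E (i : Hom E B), Ex i g) ->
      exists E (i : Hom E A), Ex i (comp g f);
  Ex_pushout : forall A B A' (i : Hom A B) (f : Hom A A'),
      (exists D (d : Hom B D), Ex i d) ->
      exists B' (i' : Hom A' B') (f' : Hom B B'),
      [/\ comp i' f = comp f' i,
          (forall W (u : Hom A' W) (v : Hom B W), comp u f = comp v i ->
             exu (fun h : Hom B' W => comp h i' = u /\ comp h f' = v)) &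
          exists D (d : Hom B' D), Ex i' d];
  Ex_pullback : forall B D D' (d : Hom B D) (g : Hom D' D),
      (exists A (i : Hom A B), Ex i d) ->
      exists B' (d' : Hom B' D') (g' : Hom B' B),
      [/\ comp d g' = comp g d',
          (forall W (u : Hom W D') (v : Hom W B), comp g u = comp d v ->
             exu (fun h : Hom W B' => comp d' h = u /\ comp g' h = v)) &
          exists A (i : Hom A B'), Ex i d']
}.

Arguments Ex {e A B D} i d.

Section ExactDefs.
Variable E : ExactCat.
Local Notation C := (ecat E).
Local Notation Obj := (Obj C).

Definition adm_mono (X Y : Obj) (i : Hom X Y) : Prop :=
  exists (D : Obj) (d : Hom Y D), Ex i d.

Definition proper_sub (X Y : Obj) : Prop :=
  exists i : Hom X Y, adm_mono i /\ ~ is_iso i.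

Definition E_simple (S : Obj) : Prop :=
  ~ is_zero S /\
  forall (X : Obj) (i : Hom X S), adm_mono i -> is_zero X \/ isomorphic X S.

Fixpoint echain (n : nat) (X : Obj) : Prop :=
  match n with
  | 0 => is_zero X
  | n'.+1 => exists Y : Obj, echain n' Y /\ proper_sub Y X
  end.

(* l_E(X) = n  (the supremum is attained and equals n) *)
Definition lengthE (X : Obj) (n : nat) : Prop :=
  echain n X /\ forall m, echain m X -> (m <= n)%N.

(* (A,E) is finite: l_E(X) < oo for all X *)
Definition finiteE : Prop :=
  forall X : Obj, exists n : nat, forall m, echain m X -> (m <= n)%N.

(* xs = [X_1; ...; X_n] is a chain X_1 \subsetneq_E ... \subsetneq_E X_n = X
   of indecomposable objects (n >= 1) *)
Definition ind_chain (xs : seq Obj) (X : Obj) : Prop :=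
  [/\ xs <> [::], last X xs = X,
      (forall k, (k < size xs)%N -> indecomposable (nth X xs k)) &
      (forall k, (k.+1 < size xs)%N -> proper_sub (nth X xs k) (nth X xs k.+1))].

Definition attained (X : Obj) (s : seq nat) : Prop :=
  exists xs : seq Obj, ind_chain xs X /\ size s = size xs /\
    forall k, (k < size xs)%N -> lengthE (nth X xs k) (nth 0%N s k).

End ExactDefs.

(* The total order <<< on finite sequences of natural numbers:
   x <<< y iff x = y, or x is a proper prefix of y, or at the first index
   where they differ x_i > y_i. *)
Fixpoint lll (x y : seq nat) : bool :=
  match x, y with
  | [::], _ => true
  | _ :: _, [::] => false
  | a :: x', b :: y' => if a == b then lll x' y' else (b < a)%N
  end.

Section MuDefs.
Variable E : ExactCat.
Local Notation Obj := (Obj (ecat E)).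

Definition is_mu (X : Obj) (s : seq nat) : Prop :=
  attained X s /\ forall t, attained X t -> lll t s.

Definition mu_filtration (xs : seq Obj) (X : Obj) : Prop :=
  ind_chain xs X /\
  exists s, is_mu X s /\
    forall k, (k < size xs)%N -> is_mu (nth X xs k) (take k.+1 s).

Definition GR_predecessor (X Y : Obj) : Prop :=
  [/\ indecomposable X, indecomposable Y, proper_sub X Y &
      exists s, is_mu X s /\
        (forall (Y' : Obj) t, indecomposable Y' -> proper_sub Y' Y ->
           is_mu Y' t -> lll t s)].

Definition GR_filtration (xs : seq Obj) (X : Obj) : Prop :=
  [/\ ind_chain xs X, E_simple (nth X xs 0) &
      forall k, (0 < k < size xs)%N -> GR_predecessor (nth X xs k.-1) (nth X xs k)].

End MuDefs.

(* Lengths strictly increase along proper admissible subobjects, so a length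
   sequence attained by a chain of indecomposables ending at X is [l(X)]
   preceded by entries smaller than l(X); on such sequences [lll] is decided by
   the prefixes.  Hence mu(X) = [l(X)] exactly when X is E-simple (E-simplicity
   only requires the absence of indecomposable proper subobjects, as every
   nonzero object has an indecomposable admissible subobject), and Y is a
   Gabriel-Roiter predecessor of X exactly when mu(X) is mu(Y) followed by
   l(X).  Both kinds of filtration are thus the chains X_1 < ... < X_n whose
   measures mu(X_k) are the prefixes of (l(X_1), ..., l(X_n)). *)

From mathcomp Require Import all_boot all_order all_algebra zify boolp.
Set Implicit Arguments. Unset Strict Implicit. Unset Printing Implicit Defensive.
Import GRing.Theory.

Section AdditiveCategory.
Variable C : AddCat.
Local Notation Obj := (Obj C).
Local Open Scope ring_scope.

Lemma comp0m (X Y Z : Obj) (f : Hom X Y) : comp (0 : Hom Y Z) f = 0.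
Proof. by apply: (addrI (comp 0 f)); rewrite -compDl !addr0. Qed.

Lemma compm0 (X Y Z : Obj) (g : Hom Y Z) : comp g (0 : Hom X Y) = 0.
Proof. by apply: (addrI (comp g 0)); rewrite -compDr !addr0. Qed.

Lemma is_zero_hom (X Y : Obj) (f : Hom X Y) : is_zero Y -> f = 0.
Proof. by move=> zY; rewrite -(comp1m f) zY comp0m. Qed.

Lemma iso_idm (X : Obj) : is_iso (idm X).
Proof. by exists (idm X); rewrite comp1m. Qed.

Lemma isomorphic_sym (X Y : Obj) : isomorphic X Y -> isomorphic Y X.
Proof. by case=> f [g [gf fg]]; exists g, f. Qed.

Lemma isomorphic_zero (X Y : Obj) : is_zero X -> isomorphic X Y -> is_zero Y.
Proof. by move=> zX [f [g [_ fg]]]; rewrite /is_zero -fg (is_zero_hom g zX) compm0. Qed.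

Lemma iso_compKl (W X Y : Obj) (i : Hom W X) (f : Hom X Y) :
  is_iso f -> is_iso (comp f i) -> is_iso i.
Proof.
move=> [g [gf fg]] [h [hfi fih]]; exists (comp h f); split; first by rewrite -compA.
by rewrite -[LHS]comp1m -gf -compA (compA f i) (compA (comp f i)) fih comp1m gf.
Qed.

Lemma decomposable_biprod (Z : Obj) : ~ is_zero Z -> ~ indecomposable Z ->
  exists A B, [/\ is_biprod Z A B, ~ is_zero A & ~ is_zero B].
Proof.
move=> nzZ not_indZ; apply: contrapT => no_split; apply: not_indZ; split=> // A B ZAB.
by apply: contrapT => /not_orP[nzA nzB]; apply: no_split; exists A, B.
Qed.

End AdditiveCategory.

Section ExactCategory.
Variable E : ExactCat.
Local Notation Obj := (Obj (ecat E)).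
Local Open Scope ring_scope.

Lemma adm_mono_idm (X : Obj) : adm_mono (idm X).
Proof. exact: Ex_id_mono. Qed.

Lemma adm_mono_comp (X Y Z : Obj) (f : Hom X Y) (g : Hom Y Z) :
  adm_mono f -> adm_mono g -> adm_mono (comp g f).
Proof. exact: Ex_comp_mono. Qed.

Lemma adm_mono_comp_iso (W X Y : Obj) (i : Hom W X) (f : Hom X Y) :
  adm_mono i -> is_iso f -> adm_mono (comp f i).
Proof.
move=> [D [d Eid]] [g [gf fg]]; exists D, (comp d g).
apply: (Ex_iso Eid (iso_idm W) (ex_intro _ g (conj gf fg)) (iso_idm D)).
  by rewrite compm1.
by rewrite comp1m -compA gf compm1.
Qed.

Lemma proper_sub_isomorphic (W X Y : Obj) :
  proper_sub W X -> isomorphic X Y -> proper_sub W Y.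
Proof.
move=> [i [adm_i not_iso_i]] [f iso_f]; exists (comp f i).
by split; [exact: adm_mono_comp_iso | move/(iso_compKl iso_f)].
Qed.

(* [E0op]: the kernel of the admissible epic [idm Z] is a zero object. *)
Lemma zero_proper_sub (Z : Obj) :
  ~ is_zero Z -> exists D : Obj, is_zero D /\ proper_sub D Z.
Proof.
move=> nzZ; have [D [i Eiid]] := Ex_id_epi Z.
have [[i0 ker_i] _] := Ex_kc Eiid; rewrite comp1m in i0.
have zD : is_zero D.
  have [h [_ uniq_h]] := ker_i D i (etrans (comp1m i) i0).
  by rewrite /is_zero (uniq_h (idm D)) ?compm1 // (uniq_h 0) ?compm0 ?i0.
exists D; split => //; exists i; split; first by exists Z, (idm Z).
by move=> [g [_ ig]]; apply: nzZ; rewrite /is_zero -ig i0 comp0m.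
Qed.

Lemma kernel_hom_ext (W A B D : Obj) (i : Hom A B) (d : Hom B D) (f g : Hom W A) :
  is_kernel i d -> comp i f = comp i g -> f = g.
Proof.
move=> [di ker_i] ifg.
have [h [_ uniq_h]] : exu (fun h : Hom W A => comp i h = comp i g).
  by apply: ker_i; rewrite compA di comp0m.
by rewrite (uniq_h f) // (uniq_h g).
Qed.

(* Pull back the admissible epic [0 : A -> DA] (whose kernel is [idm A]) along
   [0 : B -> DA]: the pullback is a product of A and B, hence isomorphic to Z,
   and its conflation transports to [(i1, p2)]. *)
Lemma biprod_conflation (Z A B : Obj) (i1 : Hom A Z) (i2 : Hom B Z)
    (p1 : Hom Z A) (p2 : Hom Z B) :
  comp p1 i1 = idm A -> comp p2 i2 = idm B -> comp p1 i2 = 0 -> comp p2 i1 = 0 ->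
  comp i1 p1 + comp i2 p2 = idm Z -> Ex i1 p2.
Proof.
move=> e11 e22 e12 e21 esum.
have [DA [dA EidA]] := Ex_id_mono A.
have dA0 : dA = 0 by have [_ [di _]] := Ex_kc EidA; rewrite -di compm1.
have [P [q2 [q1 [_ pb [A2 [k Ekq]]]]]] :=
  Ex_pullback (0 : Hom B DA) (ex_intro _ A (ex_intro _ (idm A) EidA)).
have pb_any W (u : Hom W B) (v : Hom W A) :
    exu (fun h : Hom W P => comp q2 h = u /\ comp q1 h = v).
  by apply: pb; rewrite dA0 !comp0m.
have [phi [[q2phi q1phi] _]] := pb_any Z p2 p1.
pose psi := comp i1 q1 + comp i2 q2.
have p1psi : comp p1 psi = q1 by rewrite compDr !compA e11 e12 comp0m comp1m addr0.
have p2psi : comp p2 psi = q2 by rewrite compDr !compA e21 e22 comp0m comp1m add0r.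
have psiphi : comp psi phi = idm Z by rewrite compDl -!compA q1phi q2phi.
have phipsi : comp phi psi = idm P.
  have [h [_ uniq_h]] := pb_any P q2 q1.
  by rewrite (uniq_h (idm P)) ?compm1 // (uniq_h (comp phi psi)) // !compA q2phi q1phi.
have [[q2k ker_k] _] := Ex_kc Ekq.
have psik : comp psi k = comp i1 (comp p1 (comp psi k)).
  have p2psik : comp (comp i2 p2) (comp psi k) = 0.
    by rewrite -compA (compA p2) p2psi q2k compm0.
  by rewrite compA -[LHS]comp1m -esum compDl p2psik addr0.
have [h [kh _]] : exu (fun h : Hom A A2 => comp k h = comp phi i1).
  by apply: ker_k; rewrite compA q2phi e21.
have a_iso : is_iso (comp p1 (comp psi k)).
  exists h; split; last by rewrite -!compA kh (compA psi) psiphi comp1m e11.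
  apply: (kernel_hom_ext (proj1 (Ex_kc Ekq))).
  by rewrite compm1 compA kh -compA -psik compA phipsi comp1m.
have psi_iso : is_iso psi by exists phi.
apply: (Ex_iso Ekq a_iso psi_iso (iso_idm B)); first by rewrite -psik.
by rewrite comp1m p2psi.
Qed.

Lemma biprod_proper_sub (Z A B : Obj) :
  is_biprod Z A B -> ~ is_zero B -> proper_sub A Z.
Proof.
move=> [i1 [i2 [p1 [p2 [e11 e22 e12 e21 esum]]]]] nzB.
exists i1; split; first by exists B, p2; exact: biprod_conflation esum.
move=> [q [_ i1q]]; apply: nzB.
have p20 : p2 = 0 by rewrite -[p2]compm1 -i1q compA e21 comp0m.
by rewrite /is_zero -e22 p20 comp0m.
Qed.

End ExactCategory.

Lemma lll_refl : reflexive lll.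
Proof. by elim=> //= a x IH; rewrite eqxx. Qed.

Lemma lll_anti x y : lll x y -> lll y x -> x = y.
Proof.
elim: x y => [|a x IH] [|b y] //=; rewrite eq_sym.
by case: eqVneq => [-> h1 h2|_]; [rewrite (IH y) | lia].
Qed.

Lemma lll_trans x y z : lll x y -> lll y z -> lll x z.
Proof.
elim: x y z => [|a x IH] [|b y] [|c z] //=.
by do 3!case: eqVneq => ? //=; subst; first [exact: IH | lia].
Qed.

Lemma lll_rcons (L : nat) t u :
  all (fun a => a < L) t -> all (fun a => a < L) u ->
  lll (rcons t L) (rcons u L) = lll t u.
Proof.
elim: t u => [|a t IH] [|b u] /=; rewrite ?eqxx //.
- by move=> _ /andP[bL _]; rewrite gtn_eqF.
- by case/andP=> aL _; rewrite ltn_eqF // ltnNge (ltnW aL).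
- by case/andP=> _ ht /andP[_ hu]; rewrite IH.
Qed.

(* Take a minimal first entry, then recurse on the tails. *)
Lemma exists_lll_max n (P : seq nat -> Prop) :
  (forall t, P t -> size t <= n) -> (exists t, P t) ->
  exists2 m, P m & forall t, P t -> lll t m.
Proof.
elim: n P => [|n IH] P Psize [t0 Pt0].
  exists t0 => // t /Psize; move: (Psize t0 Pt0); rewrite !leqn0 !size_eq0.
  by move=> /eqP -> /eqP ->.
have [[a [ta Pat]]|no_cons] := EM (exists a t, P (a :: t)); last first.
  have nil_only t : P t -> t = [::].
    by case: t => // a t Pat; case: no_cons; exists a, t.
  by exists [::] => [|t /nil_only -> //]; rewrite -(nil_only t0 Pt0).
have exP : exists a, `[< exists t, P (a :: t) >] by exists a; apply/asboolP; exists ta.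
case: (ex_minnP exP) => b /asboolP [tb Pbt] b_min.
have [m Pbm m_max] := IH (fun t => P (b :: t)) (fun t Pt => Psize _ Pt) (ex_intro _ tb Pbt).
exists (b :: m) => // [[|c t]] // Pct /=.
have := b_min c (asboolT (ex_intro _ t Pct)).
by case: eqVneq Pct => [-> Pbt' _|ne_cb _]; [exact: m_max | lia].
Qed.

Lemma take_succ_last (s : seq nat) k :
  last 0 (take k.+2 s) != last 0 (take k.+1 s) ->
  take k.+2 s = rcons (take k.+1 s) (last 0 (take k.+2 s)).
Proof.
case: (ltnP k.+1 (size s)) => [lt_s _|ge_s]; first by rewrite (take_nth 0 lt_s) last_rcons.
by rewrite !take_oversize ?eqxx //; lia.
Qed.

Section FiniteExactCategory.
Variable E : ExactCat.
Hypothesis hfin : finiteE E.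
Local Notation Obj := (Obj (ecat E)).

Lemma echain_isomorphic n (X Y : Obj) : echain n X -> isomorphic X Y -> echain n Y.
Proof.
case: n => [|n] /= chX isoXY; first exact: isomorphic_zero chX isoXY.
have [W [chW WX]] := chX; exists W; split=> //; exact: proper_sub_isomorphic WX isoXY.
Qed.

Lemma lengthE_exists (X : Obj) : exists n, lengthE X n.
Proof.
have [N bound] := hfin X.
have exP : exists k, `[< echain k X >].
  have [zX|nzX] := EM (is_zero X); first by exists 0; apply/asboolP.
  by have [D [zD DX]] := zero_proper_sub nzX; exists 1; apply/asboolP; exists D.
have ubP k : `[< echain k X >] -> k <= N by move/asboolP/bound.
case: (ex_maxnP exP ubP) => n /asboolP chn n_max.
by exists n; split=> // m /asboolP/n_max.
Qed.

Definition lenE (X : Obj) : nat := proj1_sig (cid (lengthE_exists X)).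

Lemma lenEP (X : Obj) : lengthE X (lenE X).
Proof. exact: proj2_sig (cid _). Qed.

Lemma lengthE_lenE (X : Obj) n : lengthE X n -> n = lenE X.
Proof.
by case: (lenEP X) => chl maxl [chn maxn]; apply/eqP; rewrite eqn_leq maxl ?maxn.
Qed.

Lemma lenE_lt (X Y : Obj) : proper_sub X Y -> lenE X < lenE Y.
Proof. by move=> XY; apply: (lenEP Y).2; exists X; split=> //; exact: (lenEP X).1. Qed.

Lemma lenE_isomorphic (X Y : Obj) : isomorphic X Y -> lenE X = lenE Y.
Proof.
move=> isoXY; apply: lengthE_lenE; have [chX maxX] := lenEP X.
split=> [|m chm]; first exact: echain_isomorphic chX isoXY.
by apply: maxX; exact: echain_isomorphic chm (isomorphic_sym isoXY).
Qed.

Lemma lenE_adm_mono (W X : Obj) (j : Hom W X) : adm_mono j -> lenE W <= lenE X.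
Proof.
move=> adm_j; have [iso_j|not_iso_j] := EM (is_iso j).
  by rewrite (lenE_isomorphic (ex_intro _ j iso_j)).
by apply/ltnW/lenE_lt; exists j.
Qed.

(* Descend into a nonzero biproduct summand, whose length is smaller. *)
Lemma exists_indecomposable_adm_sub (Z : Obj) : ~ is_zero Z ->
  exists W (j : Hom W Z), indecomposable W /\ adm_mono j.
Proof.
move lenZ: (lenE Z) => n; elim/ltn_ind: n Z lenZ => n IH Z lenZ nzZ; subst n.
have [indZ|not_indZ] := EM (indecomposable Z).
  by exists Z, (idm Z); split; last exact: adm_mono_idm.
have [A [B [ZAB nzA nzB]]] := decomposable_biprod nzZ not_indZ.
have AZ := biprod_proper_sub ZAB nzB.
have [W [j [indW adm_j]]] := IH _ (lenE_lt AZ) A erefl nzA.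
have [i [adm_i _]] := AZ; exists W, (comp i j); split=> //; exact: adm_mono_comp.
Qed.

Lemma E_simple_of_no_indecomposable_sub (S : Obj) : ~ is_zero S ->
  (forall W : Obj, indecomposable W -> ~ proper_sub W S) -> E_simple S.
Proof.
move=> nzS no_sub; split=> // Z i adm_i.
have [zZ|nzZ] := EM (is_zero Z); [by left | right].
have [iso_i|not_iso_i] := EM (is_iso i); first by exists i.
have [W [j [indW adm_j]]] := exists_indecomposable_adm_sub nzZ.
case: (no_sub W indW); exists (comp i j); split; first exact: adm_mono_comp.
move=> iso_ij; have := lenE_isomorphic (ex_intro _ _ iso_ij).
by have := lenE_adm_mono adm_j; have := lenE_lt (ex_intro _ i (conj adm_i not_iso_i)); lia.
Qed.

Lemma ind_chain1 (X : Obj) : indecomposable X -> ind_chain [:: X] X.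
Proof. by move=> indX; split=> // [[|k]]. Qed.

Lemma ind_chain_indecomposable (xs : seq Obj) (X : Obj) :
  ind_chain xs X -> indecomposable X.
Proof.
case=> nz_xs lastX ind_xs _; rewrite -lastX -nth_last; apply: ind_xs.
by case: (xs) nz_xs.
Qed.

Lemma ind_chain_rcons (ys : seq Obj) (Y X : Obj) : ind_chain ys Y ->
  proper_sub Y X -> indecomposable X -> ind_chain (rcons ys X) X.
Proof.
move=> [nz_ys lastY ind_ys sub_ys] YX indX; split; rewrite ?last_rcons //.
- by case: (ys).
- move=> k; rewrite size_rcons ltnS nth_rcons => le_k.
  case: ltnP => [lt_k|ge_k]; first by rewrite (set_nth_default Y) //; exact: ind_ys.
  by rewrite (_ : k == size ys) // eqn_leq le_k ge_k.
- move=> k; rewrite size_rcons ltnS !nth_rcons => lt_k.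
  rewrite lt_k (set_nth_default Y) //.
  case: ltnP => [lt_k1|ge_k1]; first by rewrite (set_nth_default Y) //; exact: sub_ys.
  have e : k.+1 = size ys by apply/eqP; rewrite eqn_leq lt_k ge_k1.
  by rewrite e eqxx (_ : nth Y ys k = Y) // -[in RHS]lastY -nth_last -e.
Qed.

Lemma ind_chain_belast (y : Obj) (ys : seq Obj) (X : Obj) :
  ind_chain (rcons (y :: ys) X) X ->
  ind_chain (y :: ys) (last y ys) /\ proper_sub (last y ys) X.
Proof.
move=> [_ _ ind_xs sub_xs].
have nthY k : k < (size ys).+1 -> nth (last y ys) (y :: ys) k = nth X (rcons (y :: ys) X) k.
  by move=> lt_k; rewrite nth_rcons lt_k; exact: set_nth_default.
split; first split=> //.
- by move=> k lt_k; rewrite nthY //; apply: ind_xs; rewrite size_rcons ltnW.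
- move=> k lt_k; rewrite (nthY k (ltnW lt_k)) (nthY k.+1 lt_k).
  by apply: sub_xs; rewrite size_rcons ltnW.
have := sub_xs (size ys); rewrite size_rcons ltnSn => /(_ isT).
by rewrite -nthY // (nth_last _ (y :: ys)) nth_rcons ltnn eqxx.
Qed.

Lemma attainedE (X : Obj) s :
  attained X s <-> exists2 xs, ind_chain xs X & s = map lenE xs.
Proof.
split=> [[xs [chain [size_s len_s]]] | [xs chain ->]].
  exists xs => //; apply: (@eq_from_nth _ 0) => [|k lt_k]; first by rewrite size_map.
  rewrite size_s in lt_k; rewrite (nth_map X) //; apply: lengthE_lenE; exact: len_s.
exists xs; split; rewrite ?size_map //; split=> // k lt_k.
by rewrite (nth_map X) //; exact: lenEP.
Qed.

Lemma attained1 (X : Obj) : indecomposable X -> attained X [:: lenE X].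
Proof. by move=> indX; apply/attainedE; exists [:: X]; first exact: ind_chain1. Qed.

Lemma attained_rcons (Y X : Obj) t : attained Y t -> proper_sub Y X ->
  indecomposable X -> attained X (rcons t (lenE X)).
Proof.
move=> /attainedE[ys chain ->] YX indX; apply/attainedE.
by exists (rcons ys X); [exact: ind_chain_rcons chain YX indX | rewrite map_rcons].
Qed.

Lemma attainedP (X : Obj) t : attained X t -> t = [:: lenE X] \/
  exists Y t', [/\ indecomposable Y, proper_sub Y X, attained Y t' & t = rcons t' (lenE X)].
Proof.
case/attainedE=> xs chain ->; have [nz_xs lastX _ _] := chain.
case/lastP: xs nz_xs lastX chain => // ys x _; rewrite last_rcons => -> chain.
case: ys chain => [|y ys] chain; [by left | right].
have [chain_ys YX] := ind_chain_belast chain.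
exists (last y ys), (map lenE (y :: ys)); rewrite map_rcons; split=> //.
  exact: ind_chain_indecomposable chain_ys.
by apply/attainedE; exists (y :: ys).
Qed.

Lemma attained_shape (X : Obj) t : attained X t -> exists t',
  [/\ t = rcons t' (lenE X), all (fun a => a < lenE X) t' & size t' <= lenE X].
Proof.
elim/last_ind: t X => [|t a IH] X /attainedP[e | [Y [t' [_ YX Yt' e]]]] //.
- by case: t' e Yt'.
- by exists [::].
move: Yt'; case/rcons_inj: e => <- -> /IH[t'' [-> lt_t'' size_t'']].
have lt_YX := lenE_lt YX; exists (rcons t'' (lenE Y)); split=> //.
  by rewrite all_rcons lt_YX; apply: sub_all lt_t'' => b /ltn_trans; apply.
by rewrite size_rcons (leq_ltn_trans size_t'').
Qed.

Lemma attained_lt (Y X : Obj) t :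
  attained Y t -> proper_sub Y X -> all (fun a => a < lenE X) t.
Proof.
case/attained_shape=> t' [-> lt_t' _] YX; have lt_YX := lenE_lt YX.
by rewrite all_rcons lt_YX; apply: sub_all lt_t' => a /ltn_trans; apply.
Qed.

Lemma mu_exists (X : Obj) : indecomposable X -> exists s, is_mu X s.
Proof.
move=> indX; have size_bound t : attained X t -> size t <= (lenE X).+1.
  by case/attained_shape=> t' [-> _ ?]; rewrite size_rcons.
by have [m Xm m_max] := exists_lll_max size_bound (ex_intro _ _ (attained1 indX)); exists m.
Qed.

Lemma mu_unique (X : Obj) s t : is_mu X s -> is_mu X t -> s = t.
Proof. by move=> [Xs s_max] [Xt t_max]; apply: lll_anti; [exact: t_max | exact: s_max]. Qed.

Lemma is_mu_last (X : Obj) s : is_mu X s -> last 0 s = lenE X.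
Proof. by case=> /attained_shape[t' [-> _ _]] _; rewrite last_rcons. Qed.

Lemma E_simple_mu (X : Obj) : indecomposable X -> E_simple X <-> is_mu X [:: lenE X].
Proof.
move=> indX; split=> [[_ simpleX] | [_ muX]].
  split=> [|t /attainedP[-> | [Y [t' [indY [i [adm_i not_iso_i]] _ _]]]]].
  - exact: attained1.
  - exact: lll_refl.
  case: (simpleX Y i adm_i) => [zY | isoYX]; first by case: indY.
  by have := lenE_lt (ex_intro _ i (conj adm_i not_iso_i)); rewrite (lenE_isomorphic isoYX) ltnn.
apply: E_simple_of_no_indecomposable_sub; first by case: indX.
move=> W indW WX; have lt_WX := lenE_lt WX.
by have := muX _ (attained_rcons (attained1 indW) WX indX); rewrite /= ltn_eqF // ltnNge ltnW.
Qed.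

Lemma GR_predecessor_mu (Y X : Obj) s : indecomposable Y -> indecomposable X ->
  proper_sub Y X -> is_mu Y s -> GR_predecessor Y X <-> is_mu X (rcons s (lenE X)).
Proof.
move=> indY indX YX muY; have lt_s := attained_lt muY.1 YX.
split=> [[_ _ _ [s' [muY' s'_max]]] | [_ muX]].
  rewrite (mu_unique muY' muY) in s'_max; split; first exact: attained_rcons muY.1 YX indX.
  move=> t /attainedP[-> | [Y' [t' [indY' Y'X Y't' ->]]]].
    by rewrite -[[:: _]]/(rcons [::] _) lll_rcons.
  have [m muY'm] := mu_exists indY'.
  rewrite lll_rcons //; last exact: attained_lt Y't' Y'X.
  exact: lll_trans (muY'm.2 _ Y't') (s'_max _ _ indY' Y'X muY'm).
split=> //; exists s; split=> // Y' t indY' Y'X muY'.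
have := muX _ (attained_rcons muY'.1 Y'X indX).
by rewrite lll_rcons //; exact: attained_lt muY'.1 Y'X.
Qed.

Lemma take_lenE_succ (xs : seq Obj) (X : Obj) k : k < size xs ->
  take k.+1 (map lenE xs) = rcons (take k (map lenE xs)) (lenE (nth X xs k)).
Proof. by move=> lt_k; rewrite (take_nth 0) ?size_map // (nth_map X). Qed.

Lemma GR_filtrationE (xs : seq Obj) (X : Obj) : ind_chain xs X ->
  GR_filtration xs X <->
  forall k, k < size xs -> is_mu (nth X xs k) (take k.+1 (map lenE xs)).
Proof.
move=> chain; have [nz_xs _ ind_xs sub_xs] := chain.
have pos : 0 < size xs by case: (xs) nz_xs.
split=> [[_ simple0 pred] | mu_xs].
  elim=> [|k IH] lt_k; rewrite (take_lenE_succ X lt_k).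
    by rewrite take0; apply/E_simple_mu=> //; exact: ind_xs.
  apply/(GR_predecessor_mu _ _ (sub_xs k lt_k) (IH (ltnW lt_k))).
  - exact: ind_xs (ltnW lt_k).
  - exact: ind_xs.
  - exact: pred k.+1 lt_k.
split=> //.
  apply/E_simple_mu; first exact: ind_xs.
  by have := mu_xs 0 pos; rewrite (take_lenE_succ X pos) take0.
move=> [|k] //= lt_k.
apply/(GR_predecessor_mu _ _ (sub_xs k lt_k) (mu_xs k (ltnW lt_k))).
- exact: ind_xs (ltnW lt_k).
- exact: ind_xs.
- by rewrite -take_lenE_succ //; exact: mu_xs.
Qed.

Lemma mu_filtrationE (xs : seq Obj) (X : Obj) : ind_chain xs X ->
  mu_filtration xs X <->
  forall k, k < size xs -> is_mu (nth X xs k) (take k.+1 (map lenE xs)).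
Proof.
move=> chain; have [nz_xs lastX _ sub_xs] := chain.
have pos : 0 < size xs by case: (xs) nz_xs.
split=> [[_ [s [_ mu_s]]] | mu_xs]; last first.
  split=> //; exists (map lenE xs); split=> //.
  by have := mu_xs (size xs).-1; rewrite prednK // nth_last lastX take_oversize ?size_map //; apply.
suff take_s k : k < size xs -> take k.+1 s = take k.+1 (map lenE xs).
  by move=> k lt_k; rewrite -take_s //; exact: mu_s.
elim: k => [|k IH] lt_k.
  rewrite (take_lenE_succ X lt_k) take0; case: s mu_s => [|a s] mu_s /=.
    have [t' [e _ _]] := attained_shape (mu_s 0 lt_k).1.
    by case: t' e.
  by rewrite -(is_mu_last (mu_s 0 lt_k)) /= take0.
have neq : last 0 (take k.+2 s) != last 0 (take k.+1 s).
  rewrite (is_mu_last (mu_s _ lt_k)) (is_mu_last (mu_s _ (ltnW lt_k))).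
  by rewrite gtn_eqF //; apply/lenE_lt/sub_xs.
rewrite (take_succ_last neq) (is_mu_last (mu_s _ lt_k)) IH 1?ltnW //.
by rewrite -take_lenE_succ.
Qed.

End FiniteExactCategory.

Theorem proposition7p11 (E : ExactCat) (hfin : finiteE E)
    (X : Obj (ecat E)) (hX : indecomposable X)
    (xs : seq (Obj (ecat E))) (hxs : ind_chain xs X) :
  GR_filtration xs X <-> mu_filtration xs X.
Proof. exact: iff_trans (GR_filtrationE hfin hxs) (iff_sym (mu_filtrationE hfin hxs)). Qed.
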